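(* Let $(S,\mu^{(5)})$ be a commutative $5$-ary semigroup. Define on $S\times S$ the ternary operation $\boldsymbol\mu'^{(3)}\big[(a_1,b_1),(a_2,b_2),(a_3,b_3)\big]=\big(\mu^{(5)}[a_1,b_2,a_3,b_1,a_2],\ b_3\big)$. Then $\boldsymbol\mu'^{(3)}$ is totally associative, so $(S\times S,\boldsymbol\mu'^{(3)})$ is a ternary semigroup. If $e\in S$ satisfies $\mu^{(5)}[e,e,e,e,a]=a$ for all $a\in S$, then $E=(e,e)$ satisfies $\boldsymbol\mu'^{(3)}[E,E,\mathbf S]=\mathbf S$ for all $\mathbf S\in S\times S$.
   Context: A $5$-ary semigroup is a set $S$ with a totally associative map $\mu^{(5)}:S^{\times5}\to S$ (composition of two multiplications on an ordered $9$-tuple is independent of the position of the inner one); commutative means invariant under all permutations of the five arguments. A ternary operation is totally associative if $\mu[\mu[g_1,g_2,g_3],g_4,g_5]=\mu[g_1,\mu[g_2,g_3,g_4],g_5]=\mu[g_1,g_2,\mu[g_3,g_4,g_5]]$. *)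

From mathcomp Require Import all_boot all_fingroup.
Set Implicit Arguments. Unset Strict Implicit. Unset Printing Implicit Defensive.

Definition op5 (S : Type) := S -> S -> S -> S -> S -> S.
Definition op3 (S : Type) := S -> S -> S -> S.

Definition tassoc5 (S : Type) (m : op5 S) : Prop :=
  forall x1 x2 x3 x4 x5 x6 x7 x8 x9 : S,
    let p0 := m (m x1 x2 x3 x4 x5) x6 x7 x8 x9 in
    m x1 (m x2 x3 x4 x5 x6) x7 x8 x9 = p0 /\
    m x1 x2 (m x3 x4 x5 x6 x7) x8 x9 = p0 /\
    m x1 x2 x3 (m x4 x5 x6 x7 x8) x9 = p0 /\
    m x1 x2 x3 x4 (m x5 x6 x7 x8 x9) = p0.

Definition app5 (S : Type) (m : op5 S) (x : 'I_5 -> S) : S :=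
  m (x (inord 0)) (x (inord 1)) (x (inord 2)) (x (inord 3)) (x (inord 4)).

Definition comm5 (S : Type) (m : op5 S) : Prop :=
  forall (s : 'S_5) (x : 'I_5 -> S), app5 m (x \o s) = app5 m x.

Definition tassoc3 (S : Type) (m : op3 S) : Prop :=
  forall g1 g2 g3 g4 g5 : S,
    m (m g1 g2 g3) g4 g5 = m g1 (m g2 g3 g4) g5 /\
    m g1 (m g2 g3 g4) g5 = m g1 g2 (m g3 g4 g5).

Definition mu3' (S : Type) (m : op5 S) : op3 (S * S) :=
  fun X1 X2 X3 =>
    (m X1.1 X2.2 X3.1 X1.2 X2.1, X3.2).

From mathcomp Require Import all_boot all_fingroup.

(* The nine-fold product [m (m x1 x2 x3 x4 x5) x6 x7 x8 x9] is a symmetric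
   function of its nine arguments: commutativity permutes the arguments of
   each factor, and associativity moved to position 1 followed by a swap
   exchanges an inner argument with an outer one.  Under either bracketing,
   the first component of a product of five elements (a_i, b_i) for [mu3']
   is such a nine-fold product of a1,...,a5,b1,...,b4, and the second
   component is b5; so the bracketings agree.  For the unit, commutativity
   turns [m e e a e e] into [m e e e e a] = a. *)

Section Commutative5.

Variables (S : Type) (m : op5 S).
Hypothesis m_comm : comm5 m.

Lemma op5_swap (i j : nat) (a b c d e : S) : i < 5 -> j < 5 ->
  let x k := nth a [:: a; b; c; d; e] (if k == i then j else if k == j then i else k) in
  m a b c d e = m (x 0) (x 1) (x 2) (x 3) (x 4).
Proof.
move=> lt_i5 lt_j5 x.
have eq_inord k l : k < 5 -> l < 5 -> ((inord k : 'I_5) == inord l) = (k == l).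
  by move=> lt_k5 lt_l5; rewrite -(inj_eq val_inj) /= !inordK.
have := m_comm (tperm (inord i) (inord j)) (fun k => nth a [:: a; b; c; d; e] k).
by rewrite /app5 /= !permE /= !eq_inord // !(fun_if val) /= !inordK // => <-.
Qed.

Lemma op5_swap01 a b c d e : m a b c d e = m b a c d e. Proof. exact: (op5_swap 0 1). Qed.
Lemma op5_swap02 a b c d e : m a b c d e = m c b a d e. Proof. exact: (op5_swap 0 2). Qed.
Lemma op5_swap03 a b c d e : m a b c d e = m d b c a e. Proof. exact: (op5_swap 0 3). Qed.
Lemma op5_swap04 a b c d e : m a b c d e = m e b c d a. Proof. exact: (op5_swap 0 4). Qed.
Lemma op5_swap12 a b c d e : m a b c d e = m a c b d e. Proof. exact: (op5_swap 1 2). Qed.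
Lemma op5_swap13 a b c d e : m a b c d e = m a d c b e. Proof. exact: (op5_swap 1 3). Qed.
Lemma op5_swap14 a b c d e : m a b c d e = m a e c d b. Proof. exact: (op5_swap 1 4). Qed.
Lemma op5_swap23 a b c d e : m a b c d e = m a b d c e. Proof. exact: (op5_swap 2 3). Qed.
Lemma op5_swap24 a b c d e : m a b c d e = m a b e d c. Proof. exact: (op5_swap 2 4). Qed.
Lemma op5_swap34 a b c d e : m a b c d e = m a b c e d. Proof. exact: (op5_swap 3 4). Qed.

(* Selection sort: bring the wanted argument into each position in turn. *)
Ltac op5_perm := repeat match goal with
| |- m ?a ?b ?c ?d ?e = m ?a ?b ?c ?d ?e => reflexivity
| |- m ?a ?b ?c ?d ?e = m ?a ?b ?c ?e _ => rewrite [LHS]op5_swap34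
| |- m ?a ?b ?c ?d ?e = m ?a ?b ?d _ _ => rewrite [LHS]op5_swap23
| |- m ?a ?b ?c ?d ?e = m ?a ?b ?e _ _ => rewrite [LHS]op5_swap24
| |- m ?a ?b ?c ?d ?e = m ?a ?c _ _ _ => rewrite [LHS]op5_swap12
| |- m ?a ?b ?c ?d ?e = m ?a ?d _ _ _ => rewrite [LHS]op5_swap13
| |- m ?a ?b ?c ?d ?e = m ?a ?e _ _ _ => rewrite [LHS]op5_swap14
| |- m ?a ?b ?c ?d ?e = m ?b _ _ _ _ => rewrite [LHS]op5_swap01
| |- m ?a ?b ?c ?d ?e = m ?c _ _ _ _ => rewrite [LHS]op5_swap02
| |- m ?a ?b ?c ?d ?e = m ?d _ _ _ _ => rewrite [LHS]op5_swap03
| |- m ?a ?b ?c ?d ?e = m ?e _ _ _ _ => rewrite [LHS]op5_swap04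
end.

Ltac op5_nested_perm := match goal with
| |- m (m ?a ?b ?c ?d ?e) ?f ?g ?h ?i = m (m ?a' ?b' ?c' ?d' ?e') _ _ _ _ =>
  transitivity (m (m a' b' c' d' e') f g h i);
  [congr (m _ f g h i); op5_perm | op5_perm]
end.

Lemma op5_unit_swap e a : m e e a e e = m e e e e a.
Proof. op5_perm. Qed.

Hypothesis m_assoc : tassoc5 m.

Lemma op5_exchange y1 y2 y3 y4 y5 z1 z2 z3 z4 :
  m (m y1 y2 y3 y4 y5) z1 z2 z3 z4 = m (m z1 y2 y3 y4 y5) y1 z2 z3 z4.
Proof.
have [assoc1 _] := m_assoc y1 y2 y3 y4 y5 z1 z2 z3 z4.
by rewrite -assoc1 op5_swap01; congr (m _ _ _ _ _); op5_perm.
Qed.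

Definition mu3'_flat (X1 X2 X3 X4 X5 : S * S) : S * S :=
  (m (m X1.1 X2.1 X3.1 X4.1 X5.1) X1.2 X2.2 X3.2 X4.2, X5.2).

Lemma mu3'_assoc_left X1 X2 X3 X4 X5 :
  mu3' m (mu3' m X1 X2 X3) X4 X5 = mu3'_flat X1 X2 X3 X4 X5.
Proof.
case: X1 X2 X3 X4 X5 => [a1 b1] [a2 b2] [a3 b3] [a4 b4] [a5 b5].
rewrite /mu3' /mu3'_flat /=; congr (_, _).
transitivity (m (m b2 a1 a3 b1 a2) a5 b4 b3 a4); first by op5_nested_perm.
rewrite op5_exchange.
transitivity (m (m b1 a5 a1 a3 a2) a4 b2 b4 b3); first by op5_nested_perm.
by rewrite op5_exchange; op5_nested_perm.
Qed.

Lemma mu3'_assoc_middle X1 X2 X3 X4 X5 :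
  mu3' m X1 (mu3' m X2 X3 X4) X5 = mu3'_flat X1 X2 X3 X4 X5.
Proof.
case: X1 X2 X3 X4 X5 => [a1 b1] [a2 b2] [a3 b3] [a4 b4] [a5 b5].
rewrite /mu3' /mu3'_flat /=; congr (_, _).
have [_ [_ [_ ->]]] := m_assoc a1 b4 a5 b1 a2 b3 a4 b2 a3.
transitivity (m (m b4 a1 a5 b1 a2) a3 b3 a4 b2); first by op5_nested_perm.
rewrite op5_exchange.
transitivity (m (m b1 a3 a1 a5 a2) a4 b4 b3 b2); first by op5_nested_perm.
by rewrite op5_exchange; op5_nested_perm.
Qed.

Lemma mu3'_assoc_right X1 X2 X3 X4 X5 :
  mu3' m X1 X2 (mu3' m X3 X4 X5) = mu3'_flat X1 X2 X3 X4 X5.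
Proof.
case: X1 X2 X3 X4 X5 => [a1 b1] [a2 b2] [a3 b3] [a4 b4] [a5 b5].
rewrite /mu3' /mu3'_flat /=; congr (_, _).
have [_ [-> _]] := m_assoc a1 b2 a3 b4 a5 b3 a4 b1 a2.
transitivity (m (m b2 a1 a3 b4 a5) a2 b3 a4 b1); first by op5_nested_perm.
rewrite op5_exchange.
transitivity (m (m b4 a2 a1 a3 a5) a4 b2 b3 b1); first by op5_nested_perm.
by rewrite op5_exchange; op5_nested_perm.
Qed.

End Commutative5.

Theorem mainTheorem6 (S : Type) (m : op5 S) :
  tassoc5 m -> comm5 m ->
  tassoc3 (mu3' m) /\
  (forall e : S, (forall a : S, m e e e e a = a) ->
     forall X : S * S, mu3' m (e, e) (e, e) X = X).
Proof.
move=> m_assoc m_comm; split.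
  move=> X1 X2 X3 X4 X5.
  by rewrite !mu3'_assoc_left // !mu3'_assoc_middle // mu3'_assoc_right.
move=> e e_unit [a b].
by rewrite /mu3' /= op5_unit_swap // e_unit.
Qed.
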